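(* Let $k\ge 1$ and let $G$ be a $k$-symmetric graph on $n>k$ vertices. Then $2^{\binom{k}{2}}$ divides $\binom{n}{k}$.
   Context: All graphs are finite and simple. For a graph $G$ on $n$ vertices and a graph $H$ on $k$ vertices, the density $t(H,G)$ is the number of $k$-element subsets $S\subseteq V(G)$ whose induced subgraph $G[S]$ is isomorphic to $H$, divided by $\binom{n}{k}$ (and $t(H,G)=0$ if $n<k$). A graph $G$ with $n\ge k$ vertices is called $k$-symmetric if for every graph $H$ on $k$ vertices, $t(H,G)$ equals the probability that the uniformly random labelled graph on vertex set $\{1,\dots,k\}$ (each of the $\binom{k}{2}$ possible edges present independently with probability $1/2$) is isomorphic to $H$; graphs with fewer than $k$ vertices are considered trivially $k$-symmetric. *)

From HB Require Import structures.
From mathcomp Require Import all_boot all_order all_algebra all_fingroup.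
Set Implicit Arguments. Unset Strict Implicit. Unset Printing Implicit Defensive.
Import GRing.Theory Num.Theory.

(* A simple graph G on a finite vertex type T is given by an edge relation
   e : rel T, assumed symmetric and irreflexive. *)

Definition is_lgraph (k : nat) (g : {ffun 'I_k * 'I_k -> bool}) : bool :=
  [forall i, ~~ g (i, i)] && [forall i, forall j, g (i, j) == g (j, i)].

Definition lgraph_iso (k : nat) (g h : {ffun 'I_k * 'I_k -> bool}) : bool :=
  [exists s : {perm 'I_k}, [forall i, forall j, g (i, j) == h (s i, s j)]].

Definition induced_iso (T : finType) (e : rel T) (S : {set T}) (k : nat)
    (g : {ffun 'I_k * 'I_k -> bool}) : bool :=
  [exists f : {ffun 'I_k -> T},
     [&& injectiveb f, f @: [set: 'I_k] == S &
         [forall i, forall j, e (f i) (f j) == g (i, j)]]].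

Definition density (T : finType) (e : rel T) (k : nat)
    (g : {ffun 'I_k * 'I_k -> bool}) : rat :=
  if #|T| < k then 0%R
  else (#|[set S : {set T} | (#|S| == k) && induced_iso e S g]|%:R
        / ('C(#|T|, k))%:R)%R.

(* probability that the uniform random labelled graph G(k,1/2) on 'I_k is
   isomorphic to g: each labelled graph has probability 2^-(k choose 2). *)
Definition rand_prob (k : nat) (g : {ffun 'I_k * 'I_k -> bool}) : rat :=
  (#|[set h : {ffun 'I_k * 'I_k -> bool} | is_lgraph h && lgraph_iso h g]|%:R
   / (2 ^ 'C(k, 2))%:R)%R.

Definition k_symmetric (T : finType) (e : rel T) (k : nat) : Prop :=
  #|T| < k \/
  forall g : {ffun 'I_k * 'I_k -> bool}, is_lgraph g -> density e g = rand_prob g.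

From mathcomp Require Import all_boot all_order all_algebra all_fingroup.
Set Implicit Arguments. Unset Strict Implicit. Unset Printing Implicit Defensive.
Import GRing.Theory Num.Theory.

(* Only the complete graph K_k is needed: it is the unique labelled graph in
   its isomorphism class, so rand_prob K_k = 2^-(k choose 2), while
   density K_k = N / (n choose k) for the number N of k-cliques.  Equating
   the two gives (n choose k) = N * 2^(k choose 2). *)

Definition induced_copies (T : finType) (e : rel T) (k : nat)
    (g : {ffun 'I_k * 'I_k -> bool}) : {set {set T}} :=
  [set S : {set T} | (#|S| == k) && induced_iso e S g].

Definition iso_class (k : nat) (g : {ffun 'I_k * 'I_k -> bool}) :
    {set {ffun 'I_k * 'I_k -> bool}} :=
  [set h | is_lgraph h && lgraph_iso h g].

Lemma density_eq_rand_prob_binomial (T : finType) (e : rel T) (k : nat)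
    (g : {ffun 'I_k * 'I_k -> bool}) :
  k <= #|T| -> density e g = rand_prob g ->
  'C(#|T|, k) * #|iso_class g| = #|induced_copies e g| * 2 ^ 'C(k, 2).
Proof.
move=> le_kT; rewrite /density /rand_prob ltnNge le_kT /= => /eqP E.
have binT_neq0 : ('C(#|T|, k)%:R != 0 :> rat)%R by rewrite pnatr_eq0 -lt0n bin_gt0.
have pow2_neq0 : ((2 ^ 'C(k, 2))%:R != 0 :> rat)%R by rewrite pnatr_eq0 expn_eq0.
by apply/eqP; rewrite -(eqr_nat rat) !natrM mulrC eq_sym -eqr_div.
Qed.

Definition complete_lgraph (k : nat) : {ffun 'I_k * 'I_k -> bool} :=
  [ffun p => p.1 != p.2].

Lemma complete_lgraph_is_lgraph (k : nat) : is_lgraph (complete_lgraph k).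
Proof.
apply/andP; split; apply/forallP => i.
  by rewrite ffunE /= eqxx.
by apply/forallP => j; rewrite !ffunE /= (eq_sym i j).
Qed.

Lemma lgraph_iso_complete (k : nat) (h : {ffun 'I_k * 'I_k -> bool}) :
  lgraph_iso h (complete_lgraph k) = (h == complete_lgraph k).
Proof.
apply/idP/eqP => [/existsP [s /forallP iso_s] | ->].
  apply/ffunP => -[i j]; move/forallP/(_ j)/eqP: (iso_s i) ->.
  by rewrite !ffunE /= (inj_eq perm_inj).
by apply/existsP; exists 1%g; apply/forallP => i; apply/forallP => j; rewrite !perm1.
Qed.

Lemma iso_class_complete (k : nat) : iso_class (complete_lgraph k) = [set complete_lgraph k].
Proof.
apply/setP => h; rewrite !inE lgraph_iso_complete.
by case: eqP => [->|_]; rewrite ?complete_lgraph_is_lgraph ?andbF.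
Qed.

Theorem mainTheorem4 (T : finType) (e : rel T) (e_sym : symmetric e)
    (e_irr : irreflexive e) (k : nat) (hk : 1 <= k) (hn : k < #|T|)
    (hsym : k_symmetric e k) :
  2 ^ 'C(k, 2) %| 'C(#|T|, k).
Proof.
case: hsym => [|sym_e]; first by rewrite ltnNge ltnW.
have := density_eq_rand_prob_binomial (ltnW hn)
  (sym_e _ (complete_lgraph_is_lgraph k)).
rewrite iso_class_complete cards1 muln1 => ->.
exact: dvdn_mull.
Qed.
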